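(* Let $m$ be a nonnegative integer and $r>0$. Then $$\sum_{n=0}^{\infty}\frac{1}{(n+m+1)(2n+2m+2r+1)}\frac{\binom{2n}{n}}{\binom{2n+2m+2r}{n+m+r}}=\frac{1}{2(2m+1)\binom{2m}{m}}\cdot\frac{1}{(2r-1)\binom{2r-2}{r-1}}-\frac{1}{4^{m+r}}\sum_{k=0}^m\binom{m}{k}\frac{(-1)^k}{2k+1}\frac{k!}{(r)_{k+1}}.$$
   Context: $(x)_n=x(x+1)\cdots(x+n-1)$ denotes the Pochhammer symbol, $(x)_0=1$. For non-integer arguments, binomial coefficients are understood via the Gamma function: $\binom{a}{b}=\frac{\Gamma(a+1)}{\Gamma(b+1)\Gamma(a-b+1)}$. *)

From Stdlib Require Import Reals Factorial.
From Coquelicot Require Import Coquelicot.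
Open Scope R_scope.

Definition Gamma (x : R) : R :=
  RInt_gen (fun t => Rpower t (x - 1) * exp (- t)) (at_right 0) (Rbar_locally p_infty).

Definition binomG (a b : R) : R := Gamma (a + 1) / (Gamma (b + 1) * Gamma (a - b + 1)).

Definition binom (n k : nat) : R := Binomial.C n k.

Fixpoint poch (x : R) (n : nat) : R :=
  match n with
  | O => 1
  | S n' => poch x n' * (x + INR n')
  end.

From Stdlib Require Import Reals Factorial Lra Lia.
From Coquelicot Require Import Coquelicot.
Open Scope R_scope.

(* Write [s = m + r] and [Q n = binom (2 n) n / binomG (2 n + 2 s) (n + s)], so that the n-th
   term is [Q n / ((n + m + 1) (2 n + 2 s + 1))].  Multiplying the terminating sum
   [W n = sum_(k <= m) alt_coef m r k * (n + s + 1)_k / (n + 1)_k] by [Q n] gives a potential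
   [z n = W n * Q n] with [z n - z (n + 1)] equal to the n-th term (a Gosper certificate in [k]),
   so the series sums to [z 0 - lim z].  At [n = 0], [W 0] is a terminating hypergeometric sum
   evaluated in closed form by a Zeilberger recurrence in [m], and [Gamma (s + 1) = (r)_(m+1)
   Gamma r] produces the first term.  For the limit, [(n + s + 1)_k / (n + 1)_k -> 1] and
   [Q n -> 4^(-s)]; the latter follows from Gautschi's inequality, i.e. from the log-convexity of
   the Gamma integral (Hoelder's inequality, through the weighted AM-GM inequality under the
   integral). *)

Lemma poch_pos x n : 0 < x -> 0 < poch x n.
Proof.
  intros Hx; induction n as [|n IH]; simpl; [lra|].
  apply Rmult_lt_0_compat; [exact IH|]. pose proof (pos_INR n); lra.
Qed.

Lemma poch_1 n : poch 1 n = INR (fact n).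
Proof.
  induction n as [|n IH]; [reflexivity|].
  simpl poch. rewrite IH, fact_simpl, mult_INR, S_INR. ring.
Qed.

Lemma poch_shift a k : poch (a + 1) k * a = poch a k * (a + INR k).
Proof.
  induction k as [|k IH]; simpl poch; [simpl; ring|].
  rewrite S_INR.
  replace (poch (a + 1) k * (a + 1 + INR k) * a) with (poch (a + 1) k * a * (a + 1 + INR k)) by ring.
  rewrite IH. ring.
Qed.

Lemma poch_succ_arg a k : a <> 0 -> poch (a + 1) k = poch a k * (a + INR k) / a.
Proof. intros Ha. rewrite <- poch_shift. field. exact Ha. Qed.

Lemma poch_opp_nat_vanish m k : (m < k)%nat -> poch (- INR m) k = 0.
Proof.
  intros Hmk. induction k as [|k IH]; [lia|].
  simpl poch. destruct (Nat.eq_dec m k) as [->|Hne]; [ring|].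
  rewrite IH by lia. ring.
Qed.

Lemma fact_INR_pos k : 0 < INR (fact k).
Proof. apply lt_0_INR, lt_O_fact. Qed.

Lemma binom_central N : binom (2 * N) N = INR (fact (2 * N)) / INR (fact N) ^ 2.
Proof.
  unfold binom, Binomial.C. replace (2 * N - N)%nat with N by lia.
  pose proof (fact_INR_pos N). field. lra.
Qed.

Lemma binom_central_S N :
  binom (2 * S N) (S N) = binom (2 * N) N * (2 * INR N + 1) * (2 * INR N + 2) / (INR N + 1) ^ 2.
Proof.
  rewrite !binom_central. replace (2 * S N)%nat with (S (S (2 * N))) by lia.
  rewrite !fact_simpl, !mult_INR, !S_INR, mult_INR. simpl INR.
  pose proof (fact_INR_pos N). pose proof (pos_INR N). field. lra.
Qed.

Lemma binom_central_pos N : 0 < binom (2 * N) N.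
Proof. rewrite binom_central. apply Rdiv_lt_0_compat; [|apply pow_lt]; apply fact_INR_pos. Qed.

Lemma binom_sign_fact m k : (k <= m)%nat -> binom m k * (-1) ^ k * INR (fact k) = poch (- INR m) k.
Proof.
  induction k as [|k IH]; intros Hk.
  - unfold binom. rewrite C_n_0. simpl. ring.
  - unfold binom in *. rewrite pascal_step3 by lia. simpl poch. rewrite <- IH by lia.
    rewrite fact_simpl, mult_INR, minus_INR, !S_INR by lia. simpl pow.
    pose proof (pos_INR k). field. lra.
Qed.

Lemma sum_f_R0_telescope (G : nat -> R) n : sum_f_R0 (fun k => G (S k) - G k) n = G (S n) - G O.
Proof. induction n as [|n IH]; simpl; [reflexivity | rewrite IH; ring]. Qed.

Lemma exp_le_compat a b : a <= b -> exp a <= exp b.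
Proof. intros [H|<-]; [left; apply exp_increasing, H | right; reflexivity]. Qed.

Lemma Rpower_lt_of_lt c x t : 0 < c -> 0 < x -> 0 < t < Rpower c (/ x) -> Rpower t x < c.
Proof.
  intros Hc Hx Ht.
  apply Rlt_le_trans with (Rpower (Rpower c (/ x)) x); [apply Rlt_Rpower_l; lra|].
  rewrite Rpower_mult, Rinv_l, Rpower_1 by lra. lra.
Qed.

Lemma pow_le_exp k t : (0 < k)%nat -> 0 <= t -> t ^ k <= INR k ^ k * exp t.
Proof.
  intros Hk Ht. assert (HK : 0 < INR k) by (apply lt_0_INR; exact Hk).
  replace t with (INR k * (t / INR k)) at 1 by (field; lra).
  rewrite Rpow_mult_distr. apply Rmult_le_compat_l; [apply pow_le; lra|].
  replace (exp t) with (exp (t / INR k) ^ k).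
  - apply pow_incr. split; [apply Rdiv_le_0_compat; lra|].
    pose proof (exp_ineq1_le (t / INR k)). lra.
  - rewrite <- Rpower_pow by apply exp_pos. unfold Rpower.
    rewrite ln_exp. f_equal. field. lra.
Qed.

Lemma INR_plus_cvg c : is_lim_seq (fun n => INR n + c) p_infty.
Proof.
  apply (is_lim_seq_plus _ _ p_infty c p_infty);
    [apply is_lim_seq_INR | apply is_lim_seq_const | reflexivity].
Qed.

Lemma is_lim_seq_unique_real u (l1 l2 : R) : is_lim_seq u l1 -> is_lim_seq u l2 -> l1 = l2.
Proof.
  intros H1 H2. apply is_lim_seq_unique in H1. apply is_lim_seq_unique in H2.
  rewrite H1 in H2. injection H2. easy.
Qed.

Lemma is_lim_seq_sum_f_R0 (u : nat -> nat -> R) (l : nat -> R) m :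
  (forall k, is_lim_seq (u k) (l k)) -> is_lim_seq (fun N => sum_f_R0 (fun k => u k N) m) (sum_f_R0 l m).
Proof.
  intros Hu. induction m as [|m IH]; simpl; [apply Hu | apply is_lim_seq_plus'; [exact IH | apply Hu]].
Qed.

Lemma Rpower_1_cvg (v : nat -> R) c : is_lim_seq v 1 -> is_lim_seq (fun n => Rpower (v n) c) 1.
Proof.
  intros Hv. assert (Hcont : continuity_pt (fun b => Rpower b c) 1).
  { apply continuity_pt_filterlim, (ex_derive_continuous (fun b => Rpower b c)).
    unfold Rpower. auto_derive. lra. }
  pose proof (is_lim_seq_continuous _ v 1 Hcont Hv) as H. simpl in H.
  unfold Rpower at 2 in H. rewrite ln_1, Rmult_0_r, exp_0 in H. exact H.
Qed.

(** * The Gamma integral *)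

Definition gamma_fun (x t : R) : R := Rpower t (x - 1) * exp (- t).

Definition Gamma_trunc (x a b : R) : R := RInt (gamma_fun x) a b.

(* [Rpower t y] is [exp (y * ln t)], positive even for [t <= 0]. *)
Lemma gamma_fun_pos x t : 0 < gamma_fun x t.
Proof. apply Rmult_lt_0_compat; apply exp_pos. Qed.

Lemma gamma_fun_continuous x t : 0 < t -> continuous (gamma_fun x) t.
Proof.
  intros Ht. apply (ex_derive_continuous (gamma_fun x)).
  unfold gamma_fun, Rpower. auto_derive. exact Ht.
Qed.

Lemma ex_RInt_gamma_fun x a b : 0 < a -> 0 < b -> ex_RInt (gamma_fun x) a b.
Proof.
  intros Ha Hb. apply (@ex_RInt_continuous R_CompleteNormedModule).
  intros t [Ht _]. apply gamma_fun_continuous.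
  unfold Rmin in Ht. destruct (Rle_dec a b); lra.
Qed.

Lemma Gamma_trunc_ge0 x a b : 0 < a -> a <= b -> 0 <= Gamma_trunc x a b.
Proof.
  intros Ha Hab. apply RInt_ge_0; [exact Hab | apply ex_RInt_gamma_fun; lra |].
  intros t _. left. apply gamma_fun_pos.
Qed.

Lemma Gamma_trunc_Chasles x a b c : 0 < a -> 0 < b -> 0 < c ->
  Gamma_trunc x a b + Gamma_trunc x b c = Gamma_trunc x a c.
Proof. intros. apply (@RInt_Chasles R_CompleteNormedModule); apply ex_RInt_gamma_fun; assumption. Qed.

Lemma Gamma_trunc_swap x a b : 0 < a -> 0 < b -> Gamma_trunc x b a = - Gamma_trunc x a b.
Proof.
  intros. unfold Gamma_trunc.
  rewrite <- (@opp_RInt_swap R_CompleteNormedModule); [reflexivity|].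
  apply ex_RInt_gamma_fun; assumption.
Qed.

Lemma Gamma_trunc_abs_lt_sym x (P : R -> Prop) eps : (forall t, P t -> 0 < t) ->
  (forall p q, P p -> P q -> p <= q -> Rabs (Gamma_trunc x p q) < eps) ->
  forall p q, P p -> P q -> Rabs (Gamma_trunc x p q) < eps.
Proof.
  intros HP H p q Hp Hq. destruct (Rle_dec p q) as [Hpq|Hqp]; [apply H; assumption|].
  rewrite Gamma_trunc_swap, Rabs_Ropp by auto. apply H; auto; lra.
Qed.

Lemma Gamma_trunc_le_near0 x p q : 0 < x -> 0 < p -> p <= q -> q <= 1 ->
  Gamma_trunc x p q <= Rpower q x / x.
Proof.
  intros Hx Hp Hpq Hq1.
  assert (Hint : is_RInt (fun t => Rpower t (x - 1)) p q (Rpower q x / x - Rpower p x / x)).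
  { apply (@is_RInt_derive R_CompleteNormedModule (fun t => Rpower t x / x));
      intros t Ht; unfold Rmin, Rmax in Ht; destruct (Rle_dec p q); try lra.
    - unfold Rpower. auto_derive; [lra|].
      replace ((x - 1) * ln t) with (x * ln t + - ln t) by ring.
      rewrite exp_plus, exp_Ropp, exp_ln by lra. field. lra.
    - apply (ex_derive_continuous (fun t => Rpower t (x - 1))).
      unfold Rpower. auto_derive. lra. }
  apply Rle_trans with (Rpower q x / x - Rpower p x / x).
  - apply (is_RInt_le (gamma_fun x) (fun t => Rpower t (x - 1)) p q); [exact Hpq | | exact Hint |].
    { apply (RInt_correct (gamma_fun x)), ex_RInt_gamma_fun; lra. }
    intros t Ht. unfold gamma_fun. rewrite <- (Rmult_1_r (Rpower t (x - 1))) at 2.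
    apply Rmult_le_compat_l; [left; apply exp_pos|].
    rewrite <- exp_0. apply exp_le_compat. lra.
  - assert (0 < Rpower p x / x) by (apply Rdiv_lt_0_compat; [apply exp_pos | lra]). lra.
Qed.

Lemma Gamma_trunc_small_near0 x eps : 0 < x -> 0 < eps ->
  exists d, 0 < d /\ forall p q, 0 < p < d -> 0 < q < d -> Rabs (Gamma_trunc x p q) < eps.
Proof.
  intros Hx He. set (c := Rpower (x * eps) (/ x)).
  assert (Hc : 0 < c) by apply exp_pos.
  exists (Rmin 1 c). split; [apply Rmin_pos; lra|].
  pose proof (Rmin_l 1 c). pose proof (Rmin_r 1 c).
  apply Gamma_trunc_abs_lt_sym; [intros t Ht; lra|].
  intros p q Hp Hq Hpq. rewrite Rabs_right by (apply Rle_ge, Gamma_trunc_ge0; lra).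
  apply Rle_lt_trans with (Rpower q x / x); [apply Gamma_trunc_le_near0; lra|].
  apply Rmult_lt_reg_r with x; [exact Hx|]. unfold Rdiv.
  rewrite Rmult_assoc, Rinv_l, Rmult_1_r, Rmult_comm by lra.
  apply Rpower_lt_of_lt; [apply Rmult_lt_0_compat | | fold c]; lra.
Qed.

Lemma gamma_fun_le_inv_sqr x : exists C, 0 < C /\ forall t, 1 <= t -> gamma_fun x t <= C / t ^ 2.
Proof.
  destruct (INR_unbounded (Rabs x + 1)) as [k Hk].
  assert (Hk0 : (0 < k)%nat) by (destruct k; [simpl in Hk; pose proof (Rabs_pos x); lra | lia]).
  exists (INR k ^ k). split; [apply pow_lt, lt_0_INR; exact Hk0|].
  intros t Ht. apply Rmult_le_reg_r with (t ^ 2); [apply pow_lt; lra|].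
  unfold Rdiv. rewrite Rmult_assoc, Rinv_l, Rmult_1_r by (apply pow_nonzero; lra).
  replace (gamma_fun x t * t ^ 2) with (Rpower t (x + 1) * exp (- t)).
  - apply Rle_trans with (t ^ k * exp (- t)).
    + apply Rmult_le_compat_r; [left; apply exp_pos|].
      rewrite <- Rpower_pow by lra. apply Rle_Rpower; [lra|].
      pose proof (Rle_abs x). lra.
    + apply Rmult_le_reg_r with (exp t); [apply exp_pos|].
      rewrite Rmult_assoc, <- exp_plus, Rplus_opp_l, exp_0, Rmult_1_r.
      apply pow_le_exp; [exact Hk0 | lra].
  - unfold gamma_fun. rewrite <- (Rpower_pow 2 t) by lra.
    replace (x + 1) with ((x - 1) + INR 2) by (simpl; ring).
    rewrite Rpower_plus. ring.
Qed.

Lemma Gamma_trunc_le_near_infty x C p q : 0 < C -> (forall t, 1 <= t -> gamma_fun x t <= C / t ^ 2) ->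
  1 <= p -> p <= q -> Gamma_trunc x p q <= C / p.
Proof.
  intros HC0 HC Hp Hpq.
  assert (Hint : is_RInt (fun t => C / t ^ 2) p q (C / p - C / q)).
  { replace (C / p - C / q) with (- C / q - - C / p) by (field; lra).
    apply (@is_RInt_derive R_CompleteNormedModule (fun t => - C / t));
      intros t Ht; unfold Rmin, Rmax in Ht; destruct (Rle_dec p q); try lra.
    - auto_derive; [lra|]. field. lra.
    - apply (ex_derive_continuous (fun t => C / t ^ 2)). auto_derive. nra. }
  apply Rle_trans with (C / p - C / q).
  - apply (is_RInt_le (gamma_fun x) (fun t => C / t ^ 2) p q); [exact Hpq | | exact Hint |].
    + apply (RInt_correct (gamma_fun x)), ex_RInt_gamma_fun; lra.
    + intros t Ht. apply HC. lra.
  - assert (0 < C / q) by (apply Rdiv_lt_0_compat; lra). lra.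
Qed.

Lemma Gamma_trunc_small_near_infty x eps : 0 < eps ->
  exists M, forall p q, M < p -> M < q -> Rabs (Gamma_trunc x p q) < eps.
Proof.
  intros He. destruct (gamma_fun_le_inv_sqr x) as [C [HC Hbound]].
  pose proof (Rmax_l 1 (C / eps)). pose proof (Rmax_r 1 (C / eps)).
  set (M := Rmax 1 (C / eps)) in *. exists M.
  apply (Gamma_trunc_abs_lt_sym x (fun t => M < t)); [intros t Ht; simpl in Ht; lra|].
  intros p q Hp Hq Hpq. rewrite Rabs_right by (apply Rle_ge, Gamma_trunc_ge0; lra).
  apply Rle_lt_trans with (C / p); [apply Gamma_trunc_le_near_infty; [exact HC | exact Hbound | lra..]|].
  apply Rmult_lt_reg_r with p; [lra|]. unfold Rdiv.
  rewrite Rmult_assoc, Rinv_l, Rmult_1_r by lra.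
  assert (C / eps * eps = C) by (field; lra). nra.
Qed.

Definition gamma_filter := filter_prod (at_right 0) (Rbar_locally p_infty).

Lemma at_right_0_interval d : 0 < d -> at_right 0 (fun a => 0 < a < d).
Proof.
  intros Hd. exists (mkposreal d Hd). intros y Hy Hy0. split; [exact Hy0|].
  change (Rabs (y - 0) < d) in Hy. apply Rabs_def2 in Hy. lra.
Qed.

Lemma gamma_filter_pos : gamma_filter (fun ab => 0 < fst ab /\ 0 < snd ab).
Proof.
  apply Filter_prod with (fun a => 0 < a < 1) (fun b => 0 < b).
  - apply at_right_0_interval. lra.
  - exists 0. intros b Hb. exact Hb.
  - intros a b Ha Hb. simpl. split; [apply Ha | exact Hb].
Qed.

Lemma Gamma_trunc_cauchy x : 0 < x ->
  exists l, filterlim (fun ab => Gamma_trunc x (fst ab) (snd ab)) gamma_filter (locally l).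
Proof.
  intros Hx.
  apply (@filterlim_locally_cauchy _ R_CompleteSpace gamma_filter filter_prod_proper).
  intros eps.
  assert (He2 : 0 < eps / 2) by (pose proof (cond_pos eps); lra).
  destruct (Gamma_trunc_small_near0 x (eps / 2) Hx He2) as [d [Hd Hsmall0]].
  destruct (Gamma_trunc_small_near_infty x (eps / 2) He2) as [M Hsmall_infty].
  exists (fun ab => (0 < fst ab < d) /\ Rmax 1 M < snd ab). split.
  - apply Filter_prod with (fun a => 0 < a < d) (fun b => Rmax 1 M < b).
    + apply at_right_0_interval, Hd.
    + exists (Rmax 1 M). intros b Hb. exact Hb.
    + intros a b Ha Hb. split; assumption.
  - intros [a b] [a' b'] [Ha Hb] [Ha' Hb']. simpl in *.
    pose proof (Rmax_l 1 M). pose proof (Rmax_r 1 M).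
    change (Rabs (Gamma_trunc x a' b' - Gamma_trunc x a b) < eps).
    rewrite <- (Gamma_trunc_Chasles x a' a b'), <- (Gamma_trunc_Chasles x a b b') by lra.
    replace (Gamma_trunc x a' a + (Gamma_trunc x a b + Gamma_trunc x b b') - Gamma_trunc x a b)
      with (Gamma_trunc x a' a + Gamma_trunc x b b') by ring.
    eapply Rle_lt_trans; [apply Rabs_triang|].
    pose proof (Hsmall0 a' a Ha' Ha). pose proof (Hsmall_infty b b' ltac:(lra) ltac:(lra)). lra.
Qed.

Lemma Gamma_trunc_lim x : 0 < x ->
  filterlim (fun ab => Gamma_trunc x (fst ab) (snd ab)) gamma_filter (locally (Gamma x)).
Proof.
  intros Hx. destruct (Gamma_trunc_cauchy x Hx) as [l Hl].
  assert (HG : is_RInt_gen (gamma_fun x) (at_right 0) (Rbar_locally p_infty) l).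
  { apply (filterlimi_lim_ext_loc (fun ab => Gamma_trunc x (fst ab) (snd ab))); [|exact Hl].
    eapply filter_imp; [|apply gamma_filter_pos].
    intros [a b] [Ha Hb]. apply (RInt_correct (gamma_fun x)), ex_RInt_gamma_fun; assumption. }
  unfold Gamma. change (fun t => Rpower t (x - 1) * exp (- t)) with (gamma_fun x).
  rewrite (is_RInt_gen_unique (gamma_fun x) l HG). exact Hl.
Qed.

Definition trunc_lo (n : nat) : R := / (INR n + 1).
Definition trunc_hi (n : nat) : R := INR n + 2.

Lemma trunc_lo_pos n : 0 < trunc_lo n.
Proof. apply Rinv_0_lt_compat. pose proof (pos_INR n). lra. Qed.

Lemma trunc_lo_le_1 n : trunc_lo n <= 1.
Proof.
  unfold trunc_lo. rewrite <- Rinv_1. apply Rinv_le_contravar; [lra|].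
  pose proof (pos_INR n). lra.
Qed.

Lemma trunc_hi_ge_2 n : 2 <= trunc_hi n.
Proof. unfold trunc_hi. pose proof (pos_INR n). lra. Qed.

Lemma trunc_lo_cvg : is_lim_seq trunc_lo 0.
Proof. apply (is_lim_seq_inv _ p_infty); [apply INR_plus_cvg | discriminate]. Qed.

Lemma trunc_hi_cvg : is_lim_seq trunc_hi p_infty.
Proof. apply INR_plus_cvg. Qed.

Lemma trunc_bounds_cvg : filterlim (fun n => (trunc_lo n, trunc_hi n)) eventually gamma_filter.
Proof.
  apply filterlim_pair; [|exact trunc_hi_cvg].
  intros P [eps HP]. unfold filtermap. apply (filter_imp (fun n => ball 0 eps (trunc_lo n))).
  - intros n Hn. apply HP; [exact Hn | apply trunc_lo_pos].
  - apply trunc_lo_cvg, locally_ball.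
Qed.

Lemma Gamma_trunc_cvg x : 0 < x ->
  is_lim_seq (fun n => Gamma_trunc x (trunc_lo n) (trunc_hi n)) (Gamma x).
Proof.
  intros Hx. exact (filterlim_comp _ _ _ _ (fun ab => Gamma_trunc x (fst ab) (snd ab)) _ _ _
    trunc_bounds_cvg (Gamma_trunc_lim x Hx)).
Qed.

Lemma Gamma_pos x : 0 < x -> 0 < Gamma x.
Proof.
  intros Hx.
  assert (H12 : 0 < Gamma_trunc x 1 2).
  { apply RInt_gt_0; [lra | intros; apply gamma_fun_pos |].
    intros t Ht. apply gamma_fun_continuous. lra. }
  apply Rlt_le_trans with (Gamma_trunc x 1 2); [exact H12|].
  assert (H := is_lim_seq_le (fun _ => Gamma_trunc x 1 2)
                 (fun n => Gamma_trunc x (trunc_lo n) (trunc_hi n)) (Gamma_trunc x 1 2) (Gamma x)).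
  apply H; [| apply is_lim_seq_const | apply Gamma_trunc_cvg, Hx].
  intros n. pose proof (trunc_lo_pos n). pose proof (trunc_lo_le_1 n). pose proof (trunc_hi_ge_2 n).
  rewrite <- (Gamma_trunc_Chasles x (trunc_lo n) 1 (trunc_hi n)),
    <- (Gamma_trunc_Chasles x 1 2 (trunc_hi n)) by lra.
  pose proof (Gamma_trunc_ge0 x (trunc_lo n) 1). pose proof (Gamma_trunc_ge0 x 2 (trunc_hi n)). lra.
Qed.

(* Integration by parts: [- gamma_fun (x + 1)] is a primitive of [gamma_fun (x + 1) - x gamma_fun x]. *)
Lemma Gamma_trunc_S x a b : 0 < a -> 0 < b ->
  Gamma_trunc (x + 1) a b = gamma_fun (x + 1) a - gamma_fun (x + 1) b + x * Gamma_trunc x a b.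
Proof.
  intros Ha Hb.
  assert (Hparts : is_RInt (fun t => gamma_fun (x + 1) t - x * gamma_fun x t) a b
                     (gamma_fun (x + 1) a - gamma_fun (x + 1) b)).
  { replace (gamma_fun (x + 1) a - gamma_fun (x + 1) b)
      with (- gamma_fun (x + 1) b - - gamma_fun (x + 1) a) by ring.
    apply (@is_RInt_derive R_CompleteNormedModule (fun t => - gamma_fun (x + 1) t));
      intros t Ht; assert (0 < t) by (unfold Rmin in Ht; destruct (Rle_dec a b); lra).
    - unfold gamma_fun, Rpower. auto_derive; [lra|].
      replace (x + 1 - 1) with x by ring.
      replace ((x - 1) * ln t) with (x * ln t + - ln t) by ring.
      rewrite exp_plus, (exp_Ropp (ln t)), exp_ln by lra. field. lra.
    - apply (ex_derive_continuous (fun t => gamma_fun (x + 1) t - x * gamma_fun x t)).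
      unfold gamma_fun, Rpower. auto_derive. lra. }
  assert (Hscal : is_RInt (fun t => x * gamma_fun x t) a b (x * Gamma_trunc x a b)).
  { apply (is_RInt_scal (gamma_fun x)), (RInt_correct (gamma_fun x)), ex_RInt_gamma_fun; assumption. }
  apply is_RInt_unique.
  eapply is_RInt_ext; [|exact (is_RInt_plus _ _ a b _ _ Hparts Hscal)].
  intros t _. unfold plus. simpl. ring.
Qed.

Lemma gamma_fun_trunc_lo_cvg x : 0 < x -> is_lim_seq (fun n => gamma_fun (x + 1) (trunc_lo n)) 0.
Proof.
  intros Hx. apply is_lim_seq_spec. intros eps.
  assert (Hc : 0 < Rpower eps (/ x)) by apply exp_pos.
  destruct (proj2 (is_lim_seq_spec _ _) trunc_lo_cvg (mkposreal _ Hc)) as [N HN].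
  exists N. intros n Hn. specialize (HN n Hn). simpl in HN.
  pose proof (trunc_lo_pos n). pose proof (gamma_fun_pos (x + 1) (trunc_lo n)).
  rewrite Rminus_0_r, Rabs_right in * by lra.
  apply Rle_lt_trans with (Rpower (trunc_lo n) x).
  - unfold gamma_fun. replace (x + 1 - 1) with x by ring.
    rewrite <- (Rmult_1_r (Rpower (trunc_lo n) x)) at 2.
    apply Rmult_le_compat_l; [left; apply exp_pos|].
    rewrite <- exp_0. apply exp_le_compat. lra.
  - apply Rpower_lt_of_lt; [apply cond_pos | exact Hx | lra].
Qed.

Lemma gamma_fun_trunc_hi_cvg x : is_lim_seq (fun n => gamma_fun x (trunc_hi n)) 0.
Proof.
  destruct (gamma_fun_le_inv_sqr x) as [C [HC Hbound]].
  apply is_lim_seq_le_le with (fun _ => 0) (fun n => C * / trunc_hi n).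
  - intros n. pose proof (trunc_hi_ge_2 n). split; [left; apply gamma_fun_pos|].
    apply Rle_trans with (C / trunc_hi n ^ 2); [apply Hbound; lra|].
    unfold Rdiv. apply Rmult_le_compat_l; [lra|].
    apply Rinv_le_contravar; [lra|]. simpl. nra.
  - apply is_lim_seq_const.
  - replace 0 with (C * 0) by ring. apply (is_lim_seq_scal_l _ C 0).
    apply (is_lim_seq_inv _ p_infty); [exact trunc_hi_cvg | discriminate].
Qed.

Lemma Gamma_S x : 0 < x -> Gamma (x + 1) = x * Gamma x.
Proof.
  intros Hx.
  apply (is_lim_seq_unique_real (fun n => Gamma_trunc (x + 1) (trunc_lo n) (trunc_hi n)));
    [apply Gamma_trunc_cvg; lra|].
  apply is_lim_seq_ext with (fun n => gamma_fun (x + 1) (trunc_lo n) - gamma_fun (x + 1) (trunc_hi n)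
                                      + x * Gamma_trunc x (trunc_lo n) (trunc_hi n)).
  { intros n. symmetry. apply Gamma_trunc_S; [apply trunc_lo_pos | pose proof (trunc_hi_ge_2 n); lra]. }
  replace (x * Gamma x) with (0 - 0 + x * Gamma x) by ring.
  apply is_lim_seq_plus'; [apply is_lim_seq_minus'|].
  - apply gamma_fun_trunc_lo_cvg, Hx.
  - apply gamma_fun_trunc_hi_cvg.
  - apply (is_lim_seq_scal_l _ x (Gamma x)), Gamma_trunc_cvg, Hx.
Qed.

Lemma gamma_fun_1 t : gamma_fun 1 t = exp (- t).
Proof. unfold gamma_fun, Rpower. rewrite Rminus_diag, Rmult_0_l, exp_0. ring. Qed.

Lemma Gamma_1 : Gamma 1 = 1.
Proof.
  apply (is_lim_seq_unique_real (fun n => Gamma_trunc (0 + 1) (trunc_lo n) (trunc_hi n)));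
    [rewrite Rplus_0_l; apply Gamma_trunc_cvg; lra|].
  apply is_lim_seq_ext with (fun n => gamma_fun 1 (trunc_lo n) - gamma_fun 1 (trunc_hi n)).
  { intros n. rewrite Gamma_trunc_S by (apply trunc_lo_pos || (pose proof (trunc_hi_ge_2 n); lra)).
    rewrite Rplus_0_l. ring. }
  assert (Hlo : is_lim_seq (fun n => gamma_fun 1 (trunc_lo n)) 1).
  { apply is_lim_seq_ext with (fun n => exp (- trunc_lo n)); [intros n; symmetry; apply gamma_fun_1|].
    replace 1 with (exp (- 0)) by (rewrite Ropp_0, exp_0; reflexivity).
    apply (is_lim_seq_continuous (fun t => exp (- t))); [|exact trunc_lo_cvg].
    apply continuity_pt_filterlim, (ex_derive_continuous (fun t => exp (- t))). auto_derive. easy. }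
  pose proof (is_lim_seq_minus' _ _ 1 0 Hlo (gamma_fun_trunc_hi_cvg 1)) as H.
  rewrite Rminus_0_r in H. exact H.
Qed.

Lemma Gamma_plus_nat x k : 0 < x -> Gamma (x + INR k) = poch x k * Gamma x.
Proof.
  intros Hx. induction k as [|k IH]; simpl poch; [rewrite Rplus_0_r; ring|].
  rewrite S_INR, <- Rplus_assoc, Gamma_S, IH by (pose proof (pos_INR k); lra). ring.
Qed.

Lemma Gamma_nat n : Gamma (INR n + 1) = INR (fact n).
Proof. rewrite Rplus_comm, Gamma_plus_nat, poch_1, Gamma_1 by lra. ring. Qed.

(** * Log-convexity of Gamma and Gautschi's inequality *)

Lemma weighted_AM_GM l u v : 0 <= l <= 1 -> 0 < u -> 0 < v ->
  exp (l * ln u + (1 - l) * ln v) <= l * u + (1 - l) * v.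
Proof.
  intros Hl Hu Hv. set (w := l * u + (1 - l) * v).
  assert (Hw : 0 < w) by (unfold w; destruct (Req_dec l 0) as [->|]; nra).
  assert (Hln : forall z, 0 < z -> ln (z / w) <= z / w - 1).
  { intros z Hz. pose proof (exp_ineq1_le (ln (z / w))).
    rewrite exp_ln in H by (apply Rdiv_lt_0_compat; lra). lra. }
  pose proof (Hln u Hu) as H1. pose proof (Hln v Hv) as H2.
  rewrite ln_div in H1, H2 by lra.
  assert (l * (u / w - 1) + (1 - l) * (v / w - 1) = 0) by (unfold w; field; fold w; lra).
  rewrite <- (exp_ln w) by lra. apply exp_le_compat. nra.
Qed.

Lemma gamma_fun_log_affine x y l t : 0 < t ->
  gamma_fun (l * x + (1 - l) * y) t = exp (l * ln (gamma_fun x t) + (1 - l) * ln (gamma_fun y t)).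
Proof.
  intros Ht. unfold gamma_fun, Rpower.
  rewrite !ln_mult, !ln_exp by apply exp_pos. rewrite <- exp_plus. f_equal. ring.
Qed.

Lemma gamma_fun_holder x y l A B t : 0 <= l <= 1 -> 0 < A -> 0 < B -> 0 < t ->
  gamma_fun (l * x + (1 - l) * y) t
  <= exp (l * ln A + (1 - l) * ln B) * (l / A * gamma_fun x t + (1 - l) / B * gamma_fun y t).
Proof.
  intros Hl HA HB Ht.
  assert (Hu : 0 < gamma_fun x t / A) by (apply Rdiv_lt_0_compat; [apply gamma_fun_pos | exact HA]).
  assert (Hv : 0 < gamma_fun y t / B) by (apply Rdiv_lt_0_compat; [apply gamma_fun_pos | exact HB]).
  replace (gamma_fun (l * x + (1 - l) * y) t) with
    (exp (l * ln A + (1 - l) * ln B)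
     * exp (l * ln (gamma_fun x t / A) + (1 - l) * ln (gamma_fun y t / B))).
  - apply Rmult_le_compat_l; [left; apply exp_pos|].
    replace (l / A * gamma_fun x t + (1 - l) / B * gamma_fun y t)
      with (l * (gamma_fun x t / A) + (1 - l) * (gamma_fun y t / B)) by (field; lra).
    apply weighted_AM_GM; assumption.
  - rewrite gamma_fun_log_affine, <- exp_plus, !ln_div by (apply gamma_fun_pos || assumption).
    f_equal. ring.
Qed.

Lemma Gamma_log_convex x y l : 0 < x -> 0 < y -> 0 <= l <= 1 ->
  Gamma (l * x + (1 - l) * y) <= exp (l * ln (Gamma x) + (1 - l) * ln (Gamma y)).
Proof.
  intros Hx Hy Hl. set (z := l * x + (1 - l) * y).
  assert (Hz : 0 < z) by (unfold z; destruct (Req_dec l 0) as [->|]; nra).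
  pose proof (Gamma_pos x Hx) as HA. pose proof (Gamma_pos y Hy) as HB.
  set (K := exp (l * ln (Gamma x) + (1 - l) * ln (Gamma y))).
  set (cx := K * (l / Gamma x)). set (cy := K * ((1 - l) / Gamma y)).
  set (I := fun a n => Gamma_trunc a (trunc_lo n) (trunc_hi n)).
  assert (Hle : forall n, I z n <= cx * I x n + cy * I y n).
  { intros n. pose proof (trunc_lo_pos n). pose proof (trunc_lo_le_1 n). pose proof (trunc_hi_ge_2 n).
    assert (Hint : forall a, is_RInt (gamma_fun a) (trunc_lo n) (trunc_hi n) (I a n))
      by (intros a; apply (RInt_correct (gamma_fun a)), ex_RInt_gamma_fun; lra).
    assert (Hlin : is_RInt (fun t => cx * gamma_fun x t + cy * gamma_fun y t)
                     (trunc_lo n) (trunc_hi n) (cx * I x n + cy * I y n)).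
    { apply (is_RInt_plus (fun t => cx * gamma_fun x t) (fun t => cy * gamma_fun y t));
        [exact (is_RInt_scal _ _ _ cx _ (Hint x)) | exact (is_RInt_scal _ _ _ cy _ (Hint y))]. }
    apply (is_RInt_le (gamma_fun z) _ (trunc_lo n) (trunc_hi n) _ _ ltac:(lra) (Hint z) Hlin).
    intros t Ht. unfold cx, cy. rewrite !Rmult_assoc, <- Rmult_plus_distr_l.
    apply gamma_fun_holder; lra. }
  assert (Hlim : is_lim_seq (fun n => cx * I x n + cy * I y n) (cx * Gamma x + cy * Gamma y)).
  { apply is_lim_seq_plus'; apply (is_lim_seq_scal_l _ _ (Gamma _)), Gamma_trunc_cvg; assumption. }
  replace K with (cx * Gamma x + cy * Gamma y) by (unfold cx, cy; field; lra).
  assert (H := is_lim_seq_le _ _ (Gamma z) _ Hle (Gamma_trunc_cvg z Hz) Hlim). exact H.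
Qed.

Definition Gamma_ratio (s x : R) : R := Gamma (x + s) / (Gamma x * Rpower x s).

Lemma Gamma_ratio_pos s x : 0 < x -> 0 < x + s -> 0 < Gamma_ratio s x.
Proof.
  intros Hx Hxs. apply Rdiv_lt_0_compat; [apply Gamma_pos, Hxs|].
  apply Rmult_lt_0_compat; [apply Gamma_pos, Hx | apply exp_pos].
Qed.

Lemma Gamma_ratio_le_1 a x : 0 <= a <= 1 -> 0 < x -> Gamma_ratio a x <= 1.
Proof.
  intros Ha Hx. pose proof (Gamma_pos x Hx) as HG. pose proof (exp_pos (a * ln x)) as HP.
  assert (HGP : 0 < Gamma x * Rpower x a) by (apply Rmult_lt_0_compat; assumption).
  unfold Gamma_ratio. apply Rmult_le_reg_r with (Gamma x * Rpower x a); [exact HGP|].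
  unfold Rdiv. rewrite Rmult_assoc, Rinv_l, Rmult_1_l, Rmult_1_r by lra.
  pose proof (Gamma_log_convex x (x + 1) (1 - a) Hx ltac:(lra) ltac:(lra)) as H.
  replace ((1 - a) * x + (1 - (1 - a)) * (x + 1)) with (x + a) in H by ring.
  rewrite Gamma_S, ln_mult in H by lra.
  eapply Rle_trans; [exact H|]. unfold Rpower.
  replace (Gamma x * exp (a * ln x)) with (exp (ln (Gamma x) + a * ln x))
    by (rewrite exp_plus, exp_ln; lra).
  right. f_equal. ring.
Qed.

Lemma Gamma_ratio_ge a x : 0 <= a <= 1 -> 0 < x -> x / (x + a) <= Gamma_ratio a x.
Proof.
  intros Ha Hx.
  pose proof (Gamma_pos x Hx) as HG. pose proof (Gamma_pos (x + a) ltac:(lra)) as HGa.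
  pose proof (Gamma_log_convex (x + a) (x + a + 1) a ltac:(lra) ltac:(lra) Ha) as H.
  replace (a * (x + a) + (1 - a) * (x + a + 1)) with (x + 1) in H by ring.
  rewrite !Gamma_S, ln_mult in H by lra.
  replace (a * ln (Gamma (x + a)) + (1 - a) * (ln (x + a) + ln (Gamma (x + a))))
    with (ln (Gamma (x + a)) + (1 - a) * ln (x + a)) in H by ring.
  rewrite exp_plus, exp_ln in H by lra. fold (Rpower (x + a) (1 - a)) in H.
  assert (Hmono : Rpower x a <= Rpower (x + a) a) by (apply Rle_Rpower_l; lra).
  assert (HP : 0 < Rpower x a) by apply exp_pos.
  unfold Gamma_ratio. apply Rmult_le_reg_r with ((x + a) * (Gamma x * Rpower x a)).
  { apply Rmult_lt_0_compat; [lra | apply Rmult_lt_0_compat; assumption]. }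
  replace (x / (x + a) * ((x + a) * (Gamma x * Rpower x a))) with (x * Gamma x * Rpower x a)
    by (field; lra).
  replace (Gamma (x + a) / (Gamma x * Rpower x a) * ((x + a) * (Gamma x * Rpower x a)))
    with (Gamma (x + a) * Rpower (x + a) (1 - a) * Rpower (x + a) a).
  - apply Rle_trans with (Gamma (x + a) * Rpower (x + a) (1 - a) * Rpower x a).
    + apply Rmult_le_compat_r; lra.
    + apply Rmult_le_compat_l; [left; apply Rmult_lt_0_compat; [lra | apply exp_pos] | exact Hmono].
  - rewrite Rmult_assoc, <- Rpower_plus. replace (1 - a + a) with 1 by ring.
    rewrite Rpower_1 by lra. field. lra.
Qed.

Lemma Gamma_ratio_S s x : 0 <= s -> 0 < x -> Gamma_ratio (s + 1) x = Gamma_ratio s x * ((x + s) / x).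
Proof.
  intros Hs Hx. unfold Gamma_ratio.
  replace (x + (s + 1)) with (x + s + 1) by ring.
  rewrite Gamma_S, Rpower_plus, Rpower_1 by lra.
  pose proof (Gamma_pos x Hx). pose proof (exp_pos (s * ln x)).
  field. repeat split; try lra. apply Rgt_not_eq, exp_pos.
Qed.

Section Gamma_ratio_limit.

Variable u : nat -> R.
Hypothesis u_ge_1 : forall n, 1 <= u n.
Hypothesis u_cvg : is_lim_seq u p_infty.

Lemma shift_ratio_cvg c : is_lim_seq (fun n => (u n + c) / u n) 1.
Proof.
  apply is_lim_seq_ext with (fun n => 1 + c * / u n).
  { intros n. pose proof (u_ge_1 n). field. lra. }
  assert (Hinv : is_lim_seq (fun n => / u n) 0)
    by (apply (is_lim_seq_inv _ p_infty); [exact u_cvg | discriminate]).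
  pose proof (is_lim_seq_plus' _ _ 1 (c * 0) (is_lim_seq_const 1) (is_lim_seq_scal_l _ c 0 Hinv)) as H.
  rewrite Rmult_0_r, Rplus_0_r in H. exact H.
Qed.

Lemma Gamma_ratio_cvg_01 a : 0 <= a <= 1 -> is_lim_seq (fun n => Gamma_ratio a (u n)) 1.
Proof.
  intros Ha. apply is_lim_seq_le_le with (fun n => u n / (u n + a)) (fun _ => 1).
  - intros n. pose proof (u_ge_1 n).
    split; [apply Gamma_ratio_ge | apply Gamma_ratio_le_1]; lra.
  - apply is_lim_seq_ext with (fun n => / ((u n + a) / u n)).
    { intros n. pose proof (u_ge_1 n). field. lra. }
    pose proof (is_lim_seq_inv _ 1 (shift_ratio_cvg a)) as H. simpl in H.
    rewrite Rinv_1 in H. apply H. injection. lra.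
  - apply is_lim_seq_const.
Qed.

Lemma Gamma_ratio_cvg s : 0 <= s -> is_lim_seq (fun n => Gamma_ratio s (u n)) 1.
Proof.
  intros Hs. destruct (INR_unbounded s) as [k Hk].
  assert (Hsk : s <= INR k) by lra. clear Hk. revert s Hs Hsk.
  induction k as [|k IH]; intros s Hs Hsk.
  - apply Gamma_ratio_cvg_01. simpl in Hsk. lra.
  - destruct (Rle_dec s 1) as [Hs1|Hs1]; [apply Gamma_ratio_cvg_01; lra|].
    rewrite S_INR in Hsk.
    apply is_lim_seq_ext with (fun n => Gamma_ratio (s - 1) (u n) * ((u n + (s - 1)) / u n)).
    { intros n. rewrite <- Gamma_ratio_S by (pose proof (u_ge_1 n); lra). f_equal. ring. }
    pose proof (is_lim_seq_mult' _ _ 1 1 (IH (s - 1) ltac:(lra) ltac:(lra)) (shift_ratio_cvg (s - 1)))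
      as H.
    rewrite Rmult_1_r in H. exact H.
Qed.

End Gamma_ratio_limit.

(** * Asymptotics of a ratio of central binomial coefficients *)

Definition binom_central_ratio (s : R) (N : nat) : R :=
  binom (2 * N) N * (Gamma (INR N + s + 1) ^ 2 / Gamma (2 * INR N + 2 * s + 1)).

Lemma Gamma_plus_eq s x : 0 < x -> Gamma (x + s) = Gamma_ratio s x * Gamma x * Rpower x s.
Proof.
  intros Hx. unfold Gamma_ratio. pose proof (Gamma_pos x Hx). pose proof (exp_pos (s * ln x)).
  field. split; [apply Rgt_not_eq, exp_pos | lra].
Qed.

Lemma binom_central_ratio_eq s N : 0 <= s ->
  binom_central_ratio s N =
  Gamma_ratio s (INR N + 1) ^ 2 / Gamma_ratio (2 * s) (2 * INR N + 1)
  * (Rpower ((2 * INR N + 2) / (2 * INR N + 1)) (2 * s) / Rpower 4 s).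
Proof.
  intros Hs. pose proof (pos_INR N) as HN. unfold binom_central_ratio. rewrite binom_central.
  replace (INR N + s + 1) with ((INR N + 1) + s) by ring.
  replace (2 * INR N + 2 * s + 1) with ((2 * INR N + 1) + 2 * s) by ring.
  rewrite (Gamma_plus_eq s), (Gamma_plus_eq (2 * s)), Gamma_nat by lra.
  replace (Gamma (2 * INR N + 1)) with (INR (fact (2 * N)))
    by (rewrite <- Gamma_nat, mult_INR; reflexivity).
  assert (Hpow : Rpower ((2 * INR N + 2) / (2 * INR N + 1)) (2 * s) / Rpower 4 s
                 = Rpower (INR N + 1) s ^ 2 / Rpower (2 * INR N + 1) (2 * s)).
  { unfold Rpower. rewrite ln_div by lra.
    replace (2 * INR N + 2) with (2 * (INR N + 1)) by ring. replace 4 with (2 * 2) by ring.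
    rewrite !ln_mult by lra. unfold Rdiv. rewrite <- !exp_Ropp. simpl pow.
    rewrite Rmult_1_r, <- !exp_plus.
    f_equal. ring. }
  rewrite Hpow.
  pose proof (fact_INR_pos N). pose proof (fact_INR_pos (2 * N)).
  pose proof (exp_pos (s * ln (INR N + 1))). pose proof (exp_pos (2 * s * ln (2 * INR N + 1))).
  pose proof (Gamma_ratio_pos (2 * s) (2 * INR N + 1) ltac:(lra) ltac:(lra)).
  unfold Rpower. field. repeat split; lra.
Qed.

Lemma binom_central_ratio_cvg s : 0 <= s -> is_lim_seq (binom_central_ratio s) (/ Rpower 4 s).
Proof.
  intros Hs.
  set (u1 := fun n : nat => INR n + 1). set (u2 := fun n : nat => 2 * INR n + 1).
  assert (Hu1 : forall n, 1 <= u1 n) by (intros n; unfold u1; pose proof (pos_INR n); lra).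
  assert (Hu2 : forall n, 1 <= u2 n) by (intros n; unfold u2; pose proof (pos_INR n); lra).
  assert (Hu1_cvg : is_lim_seq u1 p_infty) by apply INR_plus_cvg.
  assert (Hu2_cvg : is_lim_seq u2 p_infty).
  { apply (is_lim_seq_le_p_loc u1); [|exact Hu1_cvg].
    exists O. intros n _. unfold u1, u2. pose proof (pos_INR n). lra. }
  assert (L1 := Gamma_ratio_cvg u1 Hu1 Hu1_cvg s Hs).
  assert (L2 := Gamma_ratio_cvg u2 Hu2 Hu2_cvg (2 * s) ltac:(lra)).
  assert (L3 : is_lim_seq (fun n => Rpower ((2 * INR n + 2) / (2 * INR n + 1)) (2 * s)) 1).
  { apply Rpower_1_cvg. apply is_lim_seq_ext with (fun n => (u2 n + 1) / u2 n).
    { intros n. unfold u2. f_equal. ring. }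
    apply shift_ratio_cvg; assumption. }
  apply is_lim_seq_ext with (fun n => Gamma_ratio s (u1 n) ^ 2 / Gamma_ratio (2 * s) (u2 n)
    * (Rpower ((2 * INR n + 2) / (2 * INR n + 1)) (2 * s) / Rpower 4 s)).
  { intros n. symmetry. apply binom_central_ratio_eq, Hs. }
  assert (L1sq : is_lim_seq (fun n => Gamma_ratio s (u1 n) ^ 2) (1 * 1)).
  { apply is_lim_seq_ext with (fun n => Gamma_ratio s (u1 n) * Gamma_ratio s (u1 n)); [intros n; ring|].
    apply is_lim_seq_mult'; exact L1. }
  replace (/ Rpower 4 s) with (1 * 1 / 1 * (1 / Rpower 4 s)) by (field; apply Rgt_not_eq, exp_pos).
  apply is_lim_seq_mult'; [apply is_lim_seq_div'; [exact L1sq | exact L2 | lra]|].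
  apply is_lim_seq_div'; [exact L3 | apply is_lim_seq_const | apply Rgt_not_eq, exp_pos].
Qed.

(** * Two terminating hypergeometric identities *)

Definition alt_coef (m : nat) (r : R) (k : nat) : R :=
  binom m k * ((-1) ^ k / (2 * INR k + 1)) * (INR (fact k) / poch r (k + 1)).

Lemma alt_coef_poch m r k : (k <= m)%nat -> 0 < r ->
  alt_coef m r k = poch (- INR m) k / ((2 * INR k + 1) * poch r (k + 1)).
Proof.
  intros Hk Hr. unfold alt_coef. rewrite <- binom_sign_fact by exact Hk.
  pose proof (pos_INR k). pose proof (poch_pos r (k + 1) Hr). field. lra.
Qed.

Section Potential.

Variables (m : nat) (r : R).
Hypothesis r_pos : 0 < r.

Definition weight (x : R) (k : nat) : R := poch (x + INR m + r + 1) k / poch (x + 1) k.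

Definition weighted_sum (x : R) : R := sum_f_R0 (fun k => alt_coef m r k * weight x k) m.

Definition step_ratio (x : R) : R :=
  (2 * x + 1) * (x + INR m + r + 1) / ((x + 1) * (2 * x + 2 * INR m + 2 * r + 1)).

(* Gosper certificate of the summand of [weighted_sum x - step_ratio x * weighted_sum (x + 1)];
   it vanishes at [k = m + 1] through the factor [poch (- INR m) k]. *)
Definition weight_cert (x : R) (k : nat) : R :=
  - poch (- INR m) k * poch (x + INR m + r + 1) k
  / (poch r k * poch (x + 1) k * (x + INR m + 1) * (2 * x + 2 * INR m + 2 * r + 1)).

Lemma weight_cert_step x k : 0 <= x ->
  poch (- INR m) k / ((2 * INR k + 1) * poch r (k + 1)) * (weight x k - step_ratio x * weight (x + 1) k)
  = weight_cert x (S k) - weight_cert x k.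
Proof.
  intros Hx. pose proof (pos_INR m). pose proof (pos_INR k).
  pose proof (poch_pos r k r_pos). pose proof (poch_pos (x + 1) k ltac:(lra)).
  pose proof (poch_pos (x + INR m + r + 1) k ltac:(lra)).
  unfold weight, weight_cert, step_ratio.
  replace (x + 1 + INR m + r + 1) with ((x + INR m + r + 1) + 1) by ring.
  replace (x + 1 + 1) with ((x + 1) + 1) by ring.
  rewrite (poch_succ_arg (x + INR m + r + 1)), (poch_succ_arg (x + 1)) by lra.
  rewrite Nat.add_1_r. simpl poch. field. repeat split; lra.
Qed.

Lemma weighted_sum_step x : 0 <= x ->
  weighted_sum x - step_ratio x * weighted_sum (x + 1)
  = 1 / ((x + INR m + 1) * (2 * x + 2 * INR m + 2 * r + 1)).
Proof.
  intros Hx. unfold weighted_sum. rewrite scal_sum, <- minus_sum.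
  rewrite (sum_eq _ (fun k => weight_cert x (S k) - weight_cert x k)).
  - rewrite sum_f_R0_telescope. unfold weight_cert.
    rewrite poch_opp_nat_vanish by lia. simpl poch.
    pose proof (pos_INR m). pose proof (poch_pos r m r_pos). pose proof (poch_pos (x + 1) m ltac:(lra)).
    field. repeat split; lra.
  - intros k Hk. rewrite <- weight_cert_step by exact Hx.
    rewrite alt_coef_poch by assumption. ring.
Qed.

End Potential.

Definition hyp_term (m : nat) (r : R) (k : nat) : R :=
  poch (- INR m) k * poch (INR m + r + 1) k / ((2 * INR k + 1) * poch r (k + 1) * INR (fact k)).

Definition hyp_sum (m : nat) (r : R) : R := sum_f_R0 (hyp_term m r) m.

Definition hyp_ratio (m : nat) (r : R) : R :=
  (2 * r + 2 * INR m + 1) * (INR m + 1) / ((2 * INR m + 3) * (r + INR m + 1)).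

(* Zeilberger certificate for the recurrence [hyp_sum (S m) r = hyp_ratio m r * hyp_sum m r];
   it vanishes at [k = 0] and, through [poch (- INR (S m)) k], at [k = m + 2]. *)
Definition hyp_cert (m : nat) (r : R) (k : nat) : R :=
  - (2 * INR m + r + 2) / ((2 * INR m + 3) * (INR m + 1) * (INR m + r + 1) ^ 2)
  * INR k * poch (- INR (S m)) k * poch (INR m + r + 1) k / (INR (fact k) * poch r k).

Lemma hyp_cert_step m r k : 0 < r ->
  hyp_term (S m) r k - hyp_ratio m r * hyp_term m r k = hyp_cert m r (S k) - hyp_cert m r k.
Proof.
  intros Hr. pose proof (pos_INR m). pose proof (pos_INR k). pose proof (fact_INR_pos k).
  pose proof (poch_pos r k Hr). pose proof (poch_pos (INR m + r + 1) k ltac:(lra)).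
  unfold hyp_term, hyp_ratio, hyp_cert.
  replace (- INR m) with (- INR (S m) + 1) by (rewrite S_INR; ring).
  replace (INR (S m) + r + 1) with ((INR m + r + 1) + 1) by (rewrite S_INR; ring).
  rewrite (poch_succ_arg (- INR (S m))), (poch_succ_arg (INR m + r + 1)) by (rewrite ?S_INR; lra).
  rewrite Nat.add_1_r, fact_simpl, mult_INR, !S_INR. simpl poch.
  field. repeat split; lra.
Qed.

Lemma hyp_sum_extend m r : sum_f_R0 (hyp_term m r) (S m) = hyp_sum m r.
Proof.
  unfold hyp_sum. simpl. unfold hyp_term at 2. rewrite poch_opp_nat_vanish by lia.
  unfold Rdiv. ring.
Qed.

Lemma hyp_sum_S m r : 0 < r -> hyp_sum (S m) r = hyp_ratio m r * hyp_sum m r.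
Proof.
  intros Hr. apply Rminus_diag_uniq.
  unfold hyp_sum at 1. rewrite <- hyp_sum_extend, scal_sum, <- minus_sum.
  rewrite (sum_eq _ (fun k => hyp_cert m r (S k) - hyp_cert m r k))
    by (intros k _; rewrite <- hyp_cert_step by exact Hr; ring).
  rewrite sum_f_R0_telescope. unfold hyp_cert.
  rewrite poch_opp_nat_vanish by lia. simpl INR. unfold Rdiv. ring.
Qed.

Lemma hyp_sum_closed m r : 0 < r ->
  hyp_sum m r * poch r (m + 1) ^ 2 / poch (2 * r) (2 * m + 1)
  = 1 / (2 * (2 * INR m + 1) * binom (2 * m) m).
Proof.
  intros Hr. induction m as [|m IH].
  - unfold hyp_sum, hyp_term, binom. simpl. rewrite C_n_0. field. lra.
  - rewrite hyp_sum_S by exact Hr.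
    pose proof (pos_INR m). pose proof (binom_central_pos m).
    pose proof (poch_pos r (m + 1) Hr). pose proof (poch_pos (2 * r) (2 * m + 1) ltac:(lra)).
    replace (hyp_sum m r) with (1 / (2 * (2 * INR m + 1) * binom (2 * m) m)
                                * poch (2 * r) (2 * m + 1) / poch r (m + 1) ^ 2)
      by (rewrite <- IH; field; lra).
    replace (S m + 1)%nat with (S (m + 1)) by lia.
    replace (2 * S m + 1)%nat with (S (S (2 * m + 1))) by lia.
    rewrite binom_central_S. unfold hyp_ratio. cbn [poch].
    rewrite !S_INR, !plus_INR, mult_INR. simpl INR.
    field. repeat split; lra.
Qed.

(** * Summation of the series *)

Lemma binom_central_ratio_S s N : 0 <= s ->
  binom_central_ratio s (S N)
  = (2 * INR N + 1) * (INR N + s + 1) / ((INR N + 1) * (2 * INR N + 2 * s + 1)) * binom_central_ratio s N.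
Proof.
  intros Hs. pose proof (pos_INR N). unfold binom_central_ratio.
  rewrite binom_central_S, S_INR.
  replace (INR N + 1 + s + 1) with ((INR N + s + 1) + 1) by ring.
  replace (2 * (INR N + 1) + 2 * s + 1) with ((2 * INR N + 2 * s + 1) + 1 + 1) by ring.
  rewrite (Gamma_S (INR N + s + 1)), (Gamma_S (2 * INR N + 2 * s + 1 + 1)),
    (Gamma_S (2 * INR N + 2 * s + 1)) by lra.
  pose proof (Gamma_pos (INR N + s + 1) ltac:(lra)).
  pose proof (Gamma_pos (2 * INR N + 2 * s + 1) ltac:(lra)).
  field. repeat split; lra.
Qed.

Lemma weight_cvg m r k : 0 < r -> is_lim_seq (fun N => weight m r (INR N) k) 1.
Proof.
  intros Hr. pose proof (pos_INR m) as Hm. induction k as [|k IH].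
  - apply is_lim_seq_ext with (fun _ => 1); [|apply is_lim_seq_const].
    intros N. unfold weight. simpl. field.
  - set (u := fun N => INR N + (1 + INR k)).
    assert (Hu : forall N, 1 <= u N)
      by (intros N; unfold u; pose proof (pos_INR N); pose proof (pos_INR k); lra).
    apply is_lim_seq_ext with (fun N => weight m r (INR N) k * ((u N + (INR m + r)) / u N)).
    { intros N. unfold weight, u. cbn [poch]. pose proof (pos_INR N). pose proof (pos_INR k).
      pose proof (poch_pos (INR N + 1) k ltac:(lra)).
      pose proof (poch_pos (INR N + INR m + r + 1) k ltac:(lra)).
      field. lra. }
    pose proof (is_lim_seq_mult' _ _ 1 1 IH
                  (shift_ratio_cvg u Hu (INR_plus_cvg (1 + INR k)) (INR m + r))) as H.
    rewrite Rmult_1_r in H. exact H.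
Qed.

Definition potential (m : nat) (r : R) (N : nat) : R :=
  weighted_sum m r (INR N) * binom_central_ratio (INR m + r) N.

Lemma binom_div_binomG s N : 0 <= s ->
  binom (2 * N) N / binomG (2 * INR N + 2 * s) (INR N + s) = binom_central_ratio s N.
Proof.
  intros Hs. pose proof (pos_INR N). unfold binomG, binom_central_ratio.
  replace (2 * INR N + 2 * s - (INR N + s) + 1) with (INR N + s + 1) by ring.
  pose proof (Gamma_pos (INR N + s + 1) ltac:(lra)).
  pose proof (Gamma_pos (2 * INR N + 2 * s + 1) ltac:(lra)).
  field. split; lra.
Qed.

Lemma potential_step m r N : 0 < r ->
  1 / ((INR N + INR m + 1) * (2 * INR N + 2 * INR m + 2 * r + 1))
  * (binom (2 * N) N / binomG (2 * INR N + 2 * INR m + 2 * r) (INR N + INR m + r))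
  = potential m r N - potential m r (S N).
Proof.
  intros Hr. pose proof (pos_INR N). pose proof (pos_INR m).
  rewrite <- (weighted_sum_step m r Hr (INR N)) by lra.
  replace (2 * INR N + 2 * INR m + 2 * r) with (2 * INR N + 2 * (INR m + r)) by ring.
  replace (INR N + INR m + r) with (INR N + (INR m + r)) by ring.
  rewrite binom_div_binomG by lra.
  unfold potential. rewrite binom_central_ratio_S, S_INR by lra.
  unfold step_ratio. field. split; lra.
Qed.

Lemma weighted_sum_0 m r : 0 < r -> weighted_sum m r 0 = hyp_sum m r.
Proof.
  intros Hr. apply sum_eq. intros k Hk.
  rewrite alt_coef_poch by assumption. unfold weight, hyp_term.
  rewrite !Rplus_0_l, poch_1.
  pose proof (pos_INR k). pose proof (pos_INR m). pose proof (fact_INR_pos k).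
  pose proof (poch_pos r (k + 1) Hr).
  field. repeat split; lra.
Qed.

Lemma potential_0 m r : 0 < r ->
  potential m r 0 = 1 / (2 * (2 * INR m + 1) * binom (2 * m) m) * (Gamma r ^ 2 / Gamma (2 * r)).
Proof.
  intros Hr. unfold potential, binom_central_ratio. simpl INR.
  rewrite weighted_sum_0 by exact Hr.
  replace (2 * 0)%nat with O by reflexivity. unfold binom at 1. rewrite C_n_0.
  replace (0 + (INR m + r) + 1) with (r + INR (m + 1)) by (rewrite plus_INR; simpl; ring).
  replace (2 * 0 + 2 * (INR m + r) + 1) with (2 * r + INR (2 * m + 1))
    by (rewrite plus_INR, mult_INR; simpl; ring).
  rewrite !Gamma_plus_nat by lra. rewrite <- (hyp_sum_closed m r Hr).
  pose proof (Gamma_pos r Hr). pose proof (Gamma_pos (2 * r) ltac:(lra)).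
  pose proof (poch_pos r (m + 1) Hr). pose proof (poch_pos (2 * r) (2 * m + 1) ltac:(lra)).
  field. repeat split; lra.
Qed.

Lemma potential_cvg m r : 0 < r ->
  is_lim_seq (potential m r) (sum_f_R0 (alt_coef m r) m * / Rpower 4 (INR m + r)).
Proof.
  intros Hr. apply is_lim_seq_mult'; [|apply binom_central_ratio_cvg; pose proof (pos_INR m); lra].
  apply is_lim_seq_sum_f_R0. intros k.
  pose proof (is_lim_seq_scal_l _ (alt_coef m r k) 1 (weight_cvg m r k Hr)) as H.
  simpl in H. rewrite Rmult_1_r in H. exact H.
Qed.

Theorem theorem5p0p1 (m : nat) (r : R) (hr : 0 < r) :
  is_series
    (fun n : nat =>
       1 / ((INR n + INR m + 1) * (2 * INR n + 2 * INR m + 2 * r + 1))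
       * (binom (2 * n) n
          / binomG (2 * INR n + 2 * INR m + 2 * r) (INR n + INR m + r)))
    (1 / (2 * (2 * INR m + 1) * binom (2 * m) m)
       * (Gamma r ^ 2 / Gamma (2 * r))
     - 1 / Rpower 4 (INR m + r)
       * sum_f_R0
           (fun k : nat =>
              binom m k * ((-1) ^ k / (2 * INR k + 1))
              * (INR (fact k) / poch r (k + 1)))
           m).
Proof.
  rewrite <- potential_0 by exact hr.
  eapply (is_lim_seq_ext (fun N => potential m r 0 - potential m r (S N)) _ (Finite _)).
  { intros N. rewrite sum_n_Reals, (sum_eq _ (fun n => potential m r n - potential m r (S n)))
      by (intros n _; apply potential_step, hr).
    induction N as [|N IH]; simpl sum_f_R0; [|rewrite <- IH]; ring. }
  fold (alt_coef m r).
  replace (1 / Rpower 4 (INR m + r) * sum_f_R0 (alt_coef m r) m)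
    with (sum_f_R0 (alt_coef m r) m * / Rpower 4 (INR m + r)) by (unfold Rdiv; ring).
  apply is_lim_seq_minus'; [apply is_lim_seq_const|].
  apply (is_lim_seq_incr_1 (potential m r)), potential_cvg, hr.
Qed.
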